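(* Let $f\in\mathbb{R}[X_1,\dots,X_n]$ be a form of degree $2d$ with $f_{2d,i}>0$ for $i=1,\dots,n$, and suppose $$\sum_{\alpha\in\Delta}\frac{|f_{\alpha}|\,\alpha^{\alpha/2d}}{2d\prod_{i=1}^nf_{2d,i}^{\alpha_i/2d}}\leq 1.$$ Then $f$ is SOBS.
   Context: $\mathbb{N}=\{0,1,2,\dots\}$. For $\alpha\in\mathbb{N}^n$ write $\underline{X}^\alpha=X_1^{\alpha_1}\cdots X_n^{\alpha_n}$, $|\alpha|=\sum_i\alpha_i$, and $\alpha^{\alpha/2d}=\prod_i\alpha_i^{\alpha_i/2d}$ with the convention $0^0=1$. For $f=\sum_\alpha f_\alpha\underline{X}^\alpha$ of degree $2d$, $f_{2d,i}$ denotes the coefficient of $X_i^{2d}$, $\Omega=\{\alpha: f_\alpha\ne0\}\setminus\{\underline{0},2d\epsilon_1,\dots,2d\epsilon_n\}$ ($\epsilon_i$ the standard unit vectors), and $\Delta=\{\alpha\in\Omega:\ f_\alpha<0\text{ or }\alpha_i\text{ odd for some }i\}$. SOBS means a finite sum of squares of polynomials of the form $a\underline{X}^\alpha-b\underline{X}^\beta$, $a,b\in\mathbb{R}$. *)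

From Stdlib Require Import Reals.
From HB Require Import structures.
From mathcomp Require Import all_boot all_order all_algebra.
From mathcomp Require Import Rstruct.
From mathcomp Require Import mpoly.

Set Implicit Arguments.
Unset Strict Implicit.
Unset Printing Implicit Defensive.

Import Order.TTheory GRing.Theory Num.Theory.
Local Open Scope ring_scope.

(* Real power x^y with the convention 0^0 = 1 (and 0^y = 0 for y <> 0);
   for x > 0 this is Stdlib's Rpower x y. *)
Definition rpow (x y : R) : R :=
  if x == 0 then (if y == 0 then 1 else 0) else Rpower x y.

Definition mono_pure (n : nat) (i : 'I_n) (k : nat) : 'X_{1..n} :=
  [multinom (if j == i then k else 0%N) | j < n].

Definition coef_pure (n d : nat) (f : {mpoly R[n]}) (i : 'I_n) : R :=
  f@_(mono_pure i (2 * d)).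

Definition OmegaF (n d : nat) (f : {mpoly R[n]}) : pred 'X_{1..n} :=
  fun a => (f@_a != 0) && (a != 0%MM) && [forall i : 'I_n, a != mono_pure i (2 * d)].

Definition DeltaF (n d : nat) (f : {mpoly R[n]}) : pred 'X_{1..n} :=
  fun a => OmegaF d f a && ((f@_a < 0) || [exists i : 'I_n, odd (a i)]).

Definition delta_term (n d : nat) (f : {mpoly R[n]}) (a : 'X_{1..n}) : R :=
  `|f@_a| * (\prod_(i < n) rpow (a i)%:R ((a i)%:R / (2 * d)%:R))
  / ((2 * d)%:R * \prod_(i < n) rpow (coef_pure d f i) ((a i)%:R / (2 * d)%:R)).

Definition SOBS (n : nat) (f : {mpoly R[n]}) : Prop :=
  exists s : seq (R * R * 'X_{1..n} * 'X_{1..n}),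
    f = \sum_(t <- s) (t.1.1.1 *: 'X_[t.1.2] - t.1.1.2 *: 'X_[t.2]) ^+ 2.

From Stdlib Require Import Reals.
From HB Require Import structures.
From mathcomp Require Import all_boot all_order all_algebra.
From mathcomp Require Import Rstruct.
From mathcomp Require Import mpoly.
From mathcomp Require Import ring zify.
Import Order.TTheory GRing.Theory Num.Theory.
Local Open Scope ring_scope.

Set Implicit Arguments.
Unset Strict Implicit.
Unset Printing Implicit Defensive.

(* For [a] in Delta one picks [t] with [t_i^(2d) = f_(2d,i) / a_i] and signs
   making [2d delta_a t^a = - f_a] (an odd [a_i] absorbs a sign when [f_a > 0]);
   then [delta_a] times Hurwitz's form [sum_i a_i (t_i X_i)^(2d) - 2d (t X)^a]
   is [sum_(a_i <> 0) delta_a f_(2d,i) X_i^(2d) + f_a X^a].  Hurwitz's form is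
   SOBS: writing [a = b + c] with [|b| = |c| = d] reduces it to the forms of
   [2b] and [2c] plus a binomial square, and the form of [2b] is a discrete
   Jensen inequality for [y |-> (t X)^(2y)] on the simplex [|y| = d], which
   is midpoint convex modulo SOBS because
   [(t X)^(2y) + (t X)^(2z) - 2 (t X)^(y+z) = ((t X)^y - (t X)^z)^2].
   Since [sum delta_a <= 1], the pure coefficients left over stay nonnegative,
   and the remaining monomials have even exponents and positive coefficients. *)

Section SOBSCone.
Variable n : nat.
Implicit Types (p q : {mpoly R[n]}) (x y : 'X_{1..n}).

Lemma SOBS0 : SOBS (0 : {mpoly R[n]}).
Proof. by exists [::]; rewrite big_nil. Qed.

Lemma SOBSD p q : SOBS p -> SOBS q -> SOBS (p + q).
Proof. by move=> [s ->] [s' ->]; exists (s ++ s'); rewrite big_cat. Qed.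

Lemma SOBS_sum (I : Type) (r : seq I) (P : pred I) (F : I -> {mpoly R[n]}) :
  (forall i, P i -> SOBS (F i)) -> SOBS (\sum_(i <- r | P i) F i).
Proof. by move=> SF; apply: big_ind => //; [exact: SOBS0 | exact: SOBSD]. Qed.

Lemma SOBS_sqr_binomial a b x y : SOBS ((a *: 'X_[x] - b *: 'X_[y]) ^+ 2).
Proof. by exists [:: (a, b, x, y)]; rewrite big_seq1. Qed.

Lemma SOBSZ c p : 0 <= c -> SOBS p -> SOBS (c *: p).
Proof.
move=> c_ge0 [s ->].
exists [seq (Num.sqrt c * u.1.1.1, Num.sqrt c * u.1.1.2, u.1.2, u.2) | u <- s].
rewrite big_map scaler_sumr; apply: eq_bigr => u _ /=.
by rewrite -!scalerA -scalerBr exprZn sqr_sqrtr.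
Qed.

Lemma SOBSZn (k : nat) p : SOBS p -> SOBS (k%:R *: p).
Proof. exact/SOBSZ/ler0n. Qed.

Lemma SOBSZ_pos c p : 0 < c -> SOBS (c *: p) -> SOBS p.
Proof.
move=> c_gt0; have cV_ge0 : 0 <= c^-1 by rewrite invr_ge0 ltW.
move/(SOBSZ cV_ge0).
by rewrite scalerA mulVf ?gt_eqF // scale1r.
Qed.

Lemma SOBS_sqr_monomial c x : 0 <= c -> SOBS (c *: 'X_[x + x]).
Proof.
move=> c_ge0; have := SOBS_sqr_binomial (Num.sqrt c) 0 x x.
by rewrite scale0r subr0 exprZn sqr_sqrtr // expr2 -mpolyXD.
Qed.

(* Discrete convexity: midpoint convexity of [h] modulo SOBS forces every
   chord of [h] to lie above its graph modulo SOBS. *)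
Lemma SOBS_chord (h : nat -> {mpoly R[n]}) (N0 : nat) :
  (forall i j k, (i + j = k + k)%N -> (i <= N0)%N -> (j <= N0)%N ->
      SOBS (h i + h j - h k *+ 2)) ->
  forall N a k, (a + N <= N0)%N -> (k <= N)%N ->
  SOBS ((N - k)%:R *: h a + k%:R *: h (a + N)%N - N%:R *: h (a + k)%N).
Proof.
move=> hmid N; elim/ltn_ind: N => N IH a k aN0 kN.
have [->|k_neq0] := eqVneq k 0%N.
  by rewrite addn0 subn0 scale0r addr0 subrr; exact: SOBS0.
have [->|k_neqN] := eqVneq k N.
  by rewrite subnn scale0r add0r subrr; exact: SOBS0.
have [kk_le|kk_gt] := leqP (k + k) N.
  have mid := hmid a (a + k + k)%N (a + k)%N ltac:(lia) ltac:(lia) ltac:(lia).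
  have := IH (N - k)%N ltac:(lia) (a + k)%N k ltac:(lia) ltac:(lia).
  rewrite (_ : (a + k + (N - k) = a + N)%N); last by lia.
  move/(SOBSD (SOBSZn (N - k) mid)); congr SOBS.
  rewrite !natrB; try lia.
  by rewrite -!mul_mpolyC !rmorphB /= !rmorph_nat; ring.
have mid := hmid (a + k + k - N)%N (a + N)%N (a + k)%N ltac:(lia) ltac:(lia) ltac:(lia).
have := IH k ltac:(lia) a (k + k - N)%N ltac:(lia) ltac:(lia).
rewrite (_ : (a + (k + k - N) = a + k + k - N)%N); last by lia.
move/(SOBSD (SOBSZn k mid)); congr SOBS.
rewrite !natrB; try lia.
by rewrite -!mul_mpolyC !rmorphB /= !rmorph_nat !natrD; ring.
Qed.

End SOBSCone.

Section PurePowers.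
Variable n : nat.

Lemma mono_pureE (i : 'I_n) k l : mono_pure i k l = if l == i then k else 0%N.
Proof. exact: mnmE. Qed.

Lemma mono_pureD (i : 'I_n) k1 k2 :
  mono_pure i (k1 + k2) = (mono_pure i k1 + mono_pure i k2)%MM.
Proof. by apply/mnmP => l; rewrite mnmDE !mono_pureE; case: eqP. Qed.

Lemma eq_mono_pure (i j : 'I_n) k : (0 < k)%N ->
  (mono_pure i k == mono_pure j k) = (i == j).
Proof.
move=> k_gt0; apply/eqP/eqP => [/mnmP/(_ i) | -> //].
by rewrite !mono_pureE eqxx; case: eqP => // _; lia.
Qed.

Lemma mmap1_mono_pure (t : 'I_n -> R) i k : mmap1 t (mono_pure i k) = t i ^+ k.
Proof.
rewrite /mmap1 (bigD1 i) //= big1 ?mulr1; first by rewrite mono_pureE eqxx.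
by move=> j /negbTE ji; rewrite mono_pureE ji expr0.
Qed.

Lemma mnm_split (a : 'X_{1..n}) k : (k <= mdeg a)%N ->
  exists b c : 'X_{1..n}, a = (b + c)%MM /\ mdeg b = k.
Proof.
elim: k => [|k IH] k_le; first by exists 0%MM, a; rewrite add0m mdeg0.
have [b [c [a_bc mdb]]] := IH (ltnW k_le); rewrite {}a_bc in k_le *.
have [i ci] : exists i, c i != 0%N.
  apply/existsP; move: k_le; rewrite mdegD mdb mdegE; apply: contraTT.
  by rewrite negb_exists => /forallP c0; rewrite big1 ?addn0 ?ltnn // => i _; apply/eqP/negPn.
exists (b + U_(i))%MM, (c - U_(i))%MM; split; last by rewrite mdegD mdeg1 mdb addn1.
apply/mnmP => l; rewrite !mnmDE mnmBE mnm1E.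
by case: eqP => [<-|_]; [move: ci; lia | rewrite addn0 subn0].
Qed.

End PurePowers.

Section Slide.
Variables (n : nat) (b : 'X_{1..n}) (i j : 'I_n).
Local Notation s := (b i + b j)%N.
Local Notation supp m := [pred l | m l != 0%N].

Definition mnm_slide (k : nat) : 'X_{1..n} :=
  [multinom if l == i then k else if l == j then (s - k)%N else b l | l < n].

Lemma mnm_slideE k l :
  mnm_slide k l = if l == i then k else if l == j then (s - k)%N else b l.
Proof. exact: mnmE. Qed.

Lemma mnm_slide_id : mnm_slide (b i) = b.
Proof.
apply/mnmP => l; rewrite mnm_slideE.
by case: eqP => [->|_] //; case: eqP => [->|_] //; lia.
Qed.

Lemma mdeg_mnm_slide k : i != j -> (k <= s)%N -> mdeg (mnm_slide k) = mdeg b.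
Proof.
move=> neq_ij ks; have ji : j != i by rewrite eq_sym.
rewrite !mdegE (bigD1 i) //= (bigD1 j) //= [in RHS](bigD1 i) //= [in RHS](bigD1 j) //=.
rewrite !mnm_slideE eqxx (negbTE ji) eqxx !addnA; congr (_ + _); first lia.
by apply: eq_bigr => l /andP[/negbTE li /negbTE lj]; rewrite mnm_slideE li lj.
Qed.

Lemma mnm_slide_mid k1 k2 k : (k1 + k2 = k + k)%N -> (k1 <= s)%N -> (k2 <= s)%N ->
  (mnm_slide k1 + mnm_slide k2 = mnm_slide k + mnm_slide k)%MM.
Proof.
move=> e k1s k2s; apply/mnmP => l; rewrite !mnmDE !mnm_slideE.
by case: eqP => _; [lia | case: eqP => _ //; lia].
Qed.

Lemma card_supp_mnm_slide0 : b i != 0%N -> b j != 0%N ->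
  (#|supp (mnm_slide 0)| < #|supp b|)%N.
Proof.
move=> bi bj; apply: proper_card; apply/properP; split; last first.
  by exists i; rewrite !inE ?mnm_slideE ?eqxx.
apply/subsetP => l; rewrite !inE mnm_slideE.
by case: ifP => // _; case: ifP => [/eqP->|//].
Qed.

End Slide.

Lemma mnm_slideC n (b : 'X_{1..n}) i j : i != j ->
  mnm_slide b i j (b i + b j)%N = mnm_slide b j i 0.
Proof.
move=> neq_ij; apply/mnmP => l; rewrite !mnm_slideE subnn subn0 addnC.
by case: eqP => [->|_]; [rewrite (negbTE neq_ij) | case: eqP].
Qed.

Section AMGMForm.
Variables (n : nat) (t : 'I_n -> R).
Implicit Types (a b c x y : 'X_{1..n}).

(* The monomial [X^x] under the substitution [X_i := t_i X_i]. *)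
Definition tmono x : {mpoly R[n]} := mmap1 t x *: 'X_[x].

Lemma mmap1D x y : mmap1 t (x + y) = mmap1 t x * mmap1 t y.
Proof. by apply: commr_mmap1_M => i u; exact: mulrC. Qed.

Lemma SOBS_tmono_mid y z : SOBS (tmono (y + y) + tmono (z + z) - tmono (y + z) *+ 2).
Proof.
suff -> : tmono (y + y) + tmono (z + z) - tmono (y + z) *+ 2 =
          (mmap1 t y *: 'X_[y] - mmap1 t z *: 'X_[z]) ^+ 2 by exact: SOBS_sqr_binomial.
by rewrite /tmono !mmap1D !mpolyXD -!mul_mpolyC !rmorphM /=; ring.
Qed.

(* Hurwitz's form: [|a|] times the gap between the arithmetic and the geometric
   mean of the [|a|] terms [(t_i X_i)^|a|], taken with multiplicities [a_i]. *)
Definition amgm_form a : {mpoly R[n]} :=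
  \sum_(i < n) (a i)%:R *: tmono (mono_pure i (mdeg a)) - (mdeg a)%:R *: tmono a.

Lemma amgm_form_single a : (forall i j, a i != 0%N -> a j != 0%N -> i = j) ->
  amgm_form a = 0.
Proof.
move=> single; apply/eqP; rewrite subr_eq0; apply/eqP.
transitivity (\sum_(i < n) (a i)%:R *: tmono a); last first.
  by rewrite -scaler_suml -natr_sum mdegE.
apply: eq_bigr => i _; have [-> | ai] := eqVneq (a i) 0%N; first by rewrite !scale0r.
congr (_ *: tmono _); apply/mnmP => l; rewrite mono_pureE.
have supp_a k : k != i -> a k = 0%N.
  by move=> ki; apply/eqP; apply: contraNT ki => ak; apply/eqP/single.
case: eqP => [->|/eqP li]; last by rewrite supp_a.
by rewrite mdegE (bigD1 i) //= big1 ?addn0 // => k /supp_a.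
Qed.

Section SlideStep.
Variables (b : 'X_{1..n}) (i j : 'I_n).
Hypothesis neq_ij : i != j.
Local Notation s := (b i + b j)%N.
Local Notation p := (mnm_slide b i j 0).
Local Notation q := (mnm_slide b i j s).

Lemma SOBS_tmono_slide :
  SOBS ((b j)%:R *: tmono (p + p) + (b i)%:R *: tmono (q + q) - s%:R *: tmono (b + b)).
Proof.
pose h k := tmono (mnm_slide b i j k + mnm_slide b i j k).
have h_mid k1 k2 k : (k1 + k2 = k + k)%N -> (k1 <= s)%N -> (k2 <= s)%N ->
    SOBS (h k1 + h k2 - h k *+ 2).
  by move=> e k1s k2s; rewrite /h -(mnm_slide_mid e k1s k2s); exact: SOBS_tmono_mid.
have := SOBS_chord h_mid (a := 0) (leqnn s) (leq_addr (b j) (b i)).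
by rewrite /h !add0n mnm_slide_id // addKn.
Qed.

Lemma amgm_form_slide :
  s%:R *: amgm_form (b + b) =
    (b j)%:R *: amgm_form (p + p) + (b i)%:R *: amgm_form (q + q)
    + (mdeg (b + b))%:R *:
        ((b j)%:R *: tmono (p + p) + (b i)%:R *: tmono (q + q) - s%:R *: tmono (b + b)).
Proof.
have mdeg2 k : (k <= s)%N ->
    mdeg (mnm_slide b i j k + mnm_slide b i j k) = mdeg (b + b).
  by move=> ks; rewrite !mdegD mdeg_mnm_slide.
rewrite /amgm_form !mdeg2 ?leq0n //; set D := mdeg (b + b).
have lin (T : 'I_n -> {mpoly R[n]}) : s%:R *: \sum_(l < n) ((b + b)%MM l)%:R *: T l =
    (b j)%:R *: \sum_(l < n) ((p + p)%MM l)%:R *: T l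
    + (b i)%:R *: \sum_(l < n) ((q + q)%MM l)%:R *: T l.
  rewrite !scaler_sumr -big_split; apply: eq_bigr => l _ /=.
  rewrite !scalerA -scalerDl -!natrM -natrD !mnmDE !mnm_slideE.
  by congr (_%:R *: _); case: eqP => [->|_]; [nia | case: eqP => [->|_]; nia].
rewrite !scalerBr [in LHS]lin; move: (\sum_(l < n) _) (\sum_(l < n) _) => P Q.
by rewrite -!mul_mpolyC !rmorph_nat !natrD; ring.
Qed.

End SlideStep.

Lemma SOBS_amgm_form_double b : SOBS (amgm_form (b + b)).
Proof.
elim: {b}_.+1 {-2}b (ltnSn #|[pred l | b l != 0%N]|) => // K IH b.
rewrite ltnS => supp_b.
case: (boolP [exists i, exists j, [&& i != j, b i != 0%N & b j != 0%N]]).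
  case/existsP => i /existsP[j /and3P[ij bi bj]].
  have ji : j != i by rewrite eq_sym.
  have IHp := IH _ (leq_trans (card_supp_mnm_slide0 bi bj) supp_b).
  have IHq := IH _ (leq_trans (card_supp_mnm_slide0 bj bi) supp_b).
  rewrite -mnm_slideC // in IHq.
  apply: (@SOBSZ_pos _ (b i + b j)%:R); first by rewrite ltr0n; lia.
  rewrite amgm_form_slide //; apply: SOBSD; first apply: SOBSD.
  - exact: SOBSZn IHp.
  - exact: SOBSZn IHq.
  - exact: SOBSZn (SOBS_tmono_slide b i j).
move/existsPn => single; rewrite amgm_form_single; first exact: SOBS0.
move=> i j; rewrite !mnmDE !addnn !double_eq0 => bi bj; apply/eqP.
apply: contraTT (single i); rewrite negbK => ij; apply/existsP; exists j; by rewrite ij bi bj.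
Qed.

Lemma SOBS_amgm_form a : ~~ odd (mdeg a) -> SOBS (amgm_form a).
Proof.
move=> even_a; have [b [c [a_bc mdb]]] := @mnm_split _ a (mdeg a)./2 ltac:(lia).
have mdc : mdeg c = mdeg b.
  by move: even_a mdb; rewrite a_bc mdegD; move: (mdeg b) (mdeg c) => x y; lia.
apply: (@SOBSZ_pos _ 2); first by [].
suff -> : 2 *: amgm_form a = amgm_form (b + b) + amgm_form (c + c)
    + (mdeg (b + b))%:R *: (tmono (b + b) + tmono (c + c) - tmono (b + c) *+ 2).
  by apply: SOBSD; [apply: SOBSD | apply/SOBSZn/SOBS_tmono_mid];
     apply: SOBS_amgm_form_double.
have lin (T : 'I_n -> {mpoly R[n]}) : 2 *: \sum_(l < n) (a l)%:R *: T l =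
    \sum_(l < n) ((b + b)%MM l)%:R *: T l + \sum_(l < n) ((c + c)%MM l)%:R *: T l.
  rewrite scaler_sumr -big_split; apply: eq_bigr => l _ /=.
  by rewrite scalerA -scalerDl -natrM -natrD a_bc !mnmDE; congr (_%:R *: _); lia.
rewrite /amgm_form scalerBr lin a_bc !mdegD mdc.
move: (\sum_(l < n) _) (\sum_(l < n) _) => P Q.
by rewrite -!mul_mpolyC !rmorph_nat !natrD; ring.
Qed.

End AMGMForm.

Lemma Rpower_gt0 x y : 0 < Rpower x y.
Proof. exact/RltP/exp_pos. Qed.

Lemma Rpower0 x : Rpower x 0 = 1.
Proof. by rewrite /Rpower RmultE mul0r exp_0. Qed.

Lemma Rpower_natr x y (k : nat) : 0 < x -> Rpower x y ^+ k = Rpower x (y * k%:R).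
Proof.
move=> x_gt0; rewrite -RpowE -Rpower_pow ?Rpower_mult ?INRE ?RmultE //.
exact/RltP/Rpower_gt0.
Qed.

Lemma Rpower_div x y z : 0 < x -> 0 < y -> Rpower (x / y) z = Rpower x z / Rpower y z.
Proof.
move=> x_gt0 y_gt0; have /RltP xy_gt0 : 0 < x / y by rewrite divr_gt0.
have := Rpower_mult_distr (x / y) y z xy_gt0 (RltP y_gt0).
by rewrite !RmultE divfK ?gt_eqF // => <-; rewrite mulfK // gt_eqF // Rpower_gt0.
Qed.

Lemma rpowE x y : 0 < x -> rpow x y = Rpower x y.
Proof. by move=> x_gt0; rewrite /rpow gt_eqF. Qed.

Lemma rpow_natr_gt0 (k : nat) (D : R) : 0 < rpow k%:R (k%:R / D).
Proof.
have [-> | k_neq0] := eqVneq k 0%N; first by rewrite /rpow mulr0n RdivE mul0r !eqxx.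
by rewrite rpowE ?Rpower_gt0 // ltr0n lt0n.
Qed.

(* The case [k = 0] relies on [0 ^ 0 = 1] in [rpow]. *)
Lemma Rpower_div_natr x (k : nat) (D : R) : 0 < x ->
  Rpower (x / k%:R) D^-1 ^+ k = rpow x (k%:R / D) / rpow k%:R (k%:R / D).
Proof.
move=> x_gt0; have [-> | k_neq0] := eqVneq k 0%N.
  by rewrite expr0 mulr0n RdivE mul0r rpowE // Rpower0 /rpow !eqxx divr1.
have k_gt0 : 0 < k%:R :> R by rewrite ltr0n lt0n.
by rewrite Rpower_natr ?divr_gt0 // Rpower_div // !rpowE // !RdivE [k%:R * _]mulrC.
Qed.

Lemma sign_vector n (a : 'X_{1..n}) (b : bool) : (b -> [exists i, odd (a i)]) ->
  exists s : 'I_n -> R, (forall i, s i ^+ 2 = 1) /\ \prod_(i < n) s i ^+ a i = (-1) ^+ b.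
Proof.
case: b => [/(_ isT)/existsP[j odd_aj] | _]; last first.
  by exists (fun=> 1); split=> [i|]; rewrite ?expr1n // big1 // => i _; rewrite expr1n.
exists (fun i => if i == j then -1 else 1); split=> [i|] /=.
  by case: eqP; rewrite ?sqrrN expr1n.
rewrite (bigD1 j) //= eqxx -[(-1) ^+ a j]signr_odd odd_aj big1 ?mulr1 // => i /negbTE ->.
exact: expr1n.
Qed.

Lemma mcoeff_sum_msupp n (p : {mpoly R[n]}) (P : pred 'X_{1..n}) m :
  (\sum_(a <- msupp p | P a) p@_a *: 'X_[a])@_m = if P m then p@_m else 0.
Proof.
rewrite raddf_sum /= big_mkcond /=.
under eq_bigr => a _ do rewrite mcoeffZ mcoeffX.
have [m_supp | m_supp] := boolP (m \in msupp p).
  rewrite (bigD1_seq m) ?msupp_uniq //= eqxx mulr1 big1 ?addr0 // => a /negbTE am.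
  by case: (P a); rewrite ?am ?mulr0.
have -> : p@_m = 0 by apply/eqP; rewrite -[_ == 0]negbK -mcoeff_msupp.
rewrite big_seq big1; first by case: (P m).
move=> a a_supp; have /negbTE -> : a != m by apply: contraNneq m_supp => <-.
by case: (P a); rewrite ?mulr0.
Qed.

Section DeltaTerms.
Variables (n d : nat) (f : {mpoly R[n]}).
Hypothesis d_gt0 : (0 < d)%N.
Hypothesis f_homog : f \is (2 * d)%N.-homog.
Hypothesis coef_pure_gt0 : forall i, 0 < coef_pure d f i.
Local Notation V i := (mono_pure i (2 * d)).
Implicit Types (a m : 'X_{1..n}).

Lemma delta_term_ge0 a : 0 <= delta_term d f a.
Proof.
rewrite /delta_term; apply/divr_ge0/mulr_ge0/ltW/prodr_gt0 => // [|i _].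
  by apply/mulr_ge0/ltW/prodr_gt0 => // i _; exact: rpow_natr_gt0.
by rewrite rpowE ?Rpower_gt0.
Qed.

(* The part of the coefficient [f_{2d,i}] spent on the monomial [a]. *)
Definition pure_share a i : R :=
  if a i == 0%N then 0 else delta_term d f a * coef_pure d f i.

Lemma amgm_form_delta a : a \in msupp f -> a \in DeltaF d f ->
  exists t, delta_term d f a *: amgm_form t a =
            \sum_(i < n) pure_share a i *: 'X_[V i] + f@_a *: 'X_[a].
Proof.
move=> a_supp a_delta; have mdeg_a : mdeg a = (2 * d)%N := dhomog_mf f_homog a_supp.
have : (0 < f@_a) -> [exists i, odd (a i)].
  move: a_delta; rewrite unfold_in => /andP[_ /orP[fa_lt0 fa_gt0 | //]].
  by have := lt_trans fa_lt0 fa_gt0; rewrite ltxx.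
case/sign_vector => sg [sg_sqr sg_prod].
set D : R := (2 * d)%:R; have D_gt0 : 0 < D by rewrite ltr0n muln_gt0 d_gt0.
exists (fun i => sg i * Rpower (coef_pure d f i / (a i)%:R) D^-1).
rewrite /amgm_form mdeg_a scalerBr scaler_sumr; congr (_ + _).
  apply: eq_bigr => i _; rewrite /tmono mmap1_mono_pure !scalerA /pure_share.
  have [-> | ai_neq0] := eqVneq (a i) 0%N; first by rewrite mulr0 mul0r.
  have ai_gt0 : 0 < (a i)%:R :> R by rewrite ltr0n lt0n.
  rewrite exprMn exprM sg_sqr expr1n mul1r Rpower_natr ?divr_gt0 // -/D.
  rewrite ?RmultE mulVf ?gt_eqF // Rpower_1; last exact/RltP/divr_gt0.
  by congr (_ *: _); rewrite RdivE; field; rewrite gt_eqF.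
rewrite /tmono !scalerA -scaleNr; congr (_ *: _).
set A := \prod_(i < n) rpow (a i)%:R ((a i)%:R / D).
set B := \prod_(i < n) rpow (coef_pure d f i) ((a i)%:R / D).
have A_gt0 : 0 < A by apply: prodr_gt0 => i _; exact: rpow_natr_gt0.
have B_gt0 : 0 < B by apply: prodr_gt0 => i _; rewrite rpowE ?Rpower_gt0.
have -> : mmap1 (fun i => sg i * Rpower (coef_pure d f i / (a i)%:R) D^-1) a =
    (-1) ^+ (0 < f@_a)%R * (B / A).
  rewrite /mmap1; under eq_bigr do rewrite exprMn.
  rewrite big_split /= sg_prod -prodf_div; congr (_ * _).
  by apply: eq_bigr => i _; rewrite Rpower_div_natr.
rewrite /delta_term -/D -/A -/B.
case: ltrP => [fa_gt0 | fa_le0].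
  by rewrite expr1 gtr0_norm // RdivE !RmultE; field; rewrite !gt_eqF ?ltr0n.
by rewrite expr0 ler0_norm // RdivE !RmultE; field; rewrite !gt_eqF ?ltr0n.
Qed.

Definition pure_power m := [exists i, m == V i].

Lemma DeltaF_pure_power m : m \in DeltaF d f -> ~~ pure_power m.
Proof.
rewrite unfold_in /DeltaF /OmegaF => /andP[/andP[_ /forallP m_impure] _].
by rewrite negb_exists; apply/forallP.
Qed.

Lemma mpoly_split_DeltaF :
  f = \sum_(i < n) coef_pure d f i *: 'X_[V i]
      + \sum_(a <- msupp f | a \in DeltaF d f) f@_a *: 'X_[a]
      + \sum_(a <- msupp f | ~~ pure_power a && (a \notin DeltaF d f)) f@_a *: 'X_[a].
Proof.
apply/mpolyP => m; rewrite !mcoeffD !mcoeff_sum_msupp raddf_sum /=.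
under eq_bigr => i _ do rewrite mcoeffZ mcoeffX.
have [m_pure | m_impure] := boolP (pure_power m).
  rewrite (contraTF (@DeltaF_pure_power m) m_pure) /= !addr0.
  case/existsP: m_pure => i0 /eqP ->.
  rewrite (bigD1 i0) //= eqxx mulr1 big1 ?addr0 // => i /negbTE i_neq.
  by rewrite eq_mono_pure ?muln_gt0 ?d_gt0 // i_neq mulr0.
rewrite big1 ?add0r => [|i _]; last first.
  case: eqP => [Vi_m | _]; last exact: mulr0.
  by move: m_impure; rewrite -Vi_m; case/existsP; exists i.
by case: (m \in DeltaF d f); rewrite ?addr0 ?add0r.
Qed.

Lemma SOBS_even_term m : m \in msupp f -> ~~ pure_power m -> m \notin DeltaF d f ->
  SOBS (f@_m *: 'X_[m]).
Proof.
move=> m_supp m_impure m_ndelta; have fm_neq0 : f@_m != 0 by rewrite -mcoeff_msupp.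
have m_neq0 : m != 0%MM.
  by rewrite -mdeg_eq0 (dhomog_mf f_homog m_supp) muln_eq0 negb_or /= -lt0n d_gt0.
have m_omega : OmegaF d f m.
  rewrite /OmegaF fm_neq0 m_neq0; apply/forallP => i; apply: contra m_impure => /eqP->.
  by apply/existsP; exists i.
move: m_ndelta; rewrite unfold_in /DeltaF m_omega negb_or -leNgt.
case/andP => fm_ge0 /existsPn m_even.
have {2}-> : m = ([multinom (m i)./2 | i < n] + [multinom (m i)./2 | i < n])%MM.
  by apply/mnmP => i; rewrite mnmDE mnmE addnn halfK (negbTE (m_even i)) subn0.
exact: SOBS_sqr_monomial.
Qed.

Lemma pure_residual_ge0 i :
  \sum_(a <- msupp f | a \in DeltaF d f) delta_term d f a <= 1 ->
  0 <= coef_pure d f i - \sum_(a <- msupp f | a \in DeltaF d f) pure_share a i.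
Proof.
move=> delta_le1; rewrite subr_ge0; have fi_ge0 := ltW (coef_pure_gt0 i).
apply: le_trans (_ : _ <= \sum_(a <- msupp f | a \in DeltaF d f)
                             delta_term d f a * coef_pure d f i) _.
  apply: ler_sum => a _; rewrite /pure_share.
  by case: eqP => _ //; exact: mulr_ge0 (delta_term_ge0 a) fi_ge0.
by rewrite -mulr_suml ler_piMl.
Qed.

End DeltaTerms.

Theorem corollary2p7 (n d : nat) (f : {mpoly R[n]}) :
  (0 < d)%N ->
  f \is (2 * d)%N.-homog ->
  (forall i : 'I_n, 0 < coef_pure d f i) ->
  \sum_(a <- msupp f | a \in DeltaF d f) delta_term d f a <= 1 ->
  SOBS f.
Proof.
move=> d_gt0 f_homog f_pure_gt0 delta_le1.
pose share i := \sum_(a <- msupp f | a \in DeltaF d f) pure_share d f a i.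
have -> : f = \sum_(i < n) (coef_pure d f i - share i) *: 'X_[mono_pure i (2 * d)]
    + \sum_(a <- msupp f | a \in DeltaF d f)
        (\sum_(i < n) pure_share d f a i *: 'X_[mono_pure i (2 * d)] + f@_a *: 'X_[a])
    + \sum_(a <- msupp f | ~~ pure_power d a && (a \notin DeltaF d f)) f@_a *: 'X_[a].
  rewrite {1}(mpoly_split_DeltaF f d_gt0) big_split /= exchange_big /= addrA.
  congr (_ + _ + _); rewrite -big_split; apply: eq_bigr => i _.
  by rewrite /= -scaler_suml -scalerDl subrK.
apply: SOBSD; first apply: SOBSD.
- apply: SOBS_sum => i _; rewrite mul2n -addnn mono_pureD.
  exact/SOBS_sqr_monomial/pure_residual_ge0.
- rewrite big_seq_cond; apply: SOBS_sum => a /andP[a_supp a_delta].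
  have [t <-] := amgm_form_delta d_gt0 f_homog f_pure_gt0 a_supp a_delta.
  apply/SOBSZ/SOBS_amgm_form; first exact: delta_term_ge0.
  by rewrite (dhomog_mf f_homog a_supp) oddM.
- rewrite big_seq_cond; apply: SOBS_sum => a /andP[a_supp /andP[a_impure a_ndelta]].
  exact: (SOBS_even_term d_gt0 f_homog a_supp a_impure a_ndelta).
Qed.
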